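(* Let $U$ be a finite set of users, $R$ a finite set of resources, $w_c$ a user-independent weighted constraint, and $A_1,A_2\subseteq U\times R$ two authorization relations such that $\mathrm{usr}_{A_1}(T)=\mathrm{usr}_{A_2}(T)$ for all $T\subseteq R$. Then $w_c(A_1)=w_c(A_2)$.
   Context: A weighted constraint is a function $w_c:2^{U\times R}\to\mathbb{N}$. It is user-independent if $w_c(\sigma(A))=w_c(A)$ for every $A\subseteq U\times R$ and every permutation $\sigma$ of $U$, where $\sigma(A)=\{(\sigma(u),r):(u,r)\in A\}$. For $A\subseteq U\times R$ and $u\in U$, $A(u)=\{r:(u,r)\in A\}$. The user profile of $A$ is $\mathrm{usr}_A:2^R\to\mathbb{N}$, $\mathrm{usr}_A(T)=|\{u\in U:A(u)=T\}|$. *)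

From mathcomp Require Import all_boot all_fingroup.
Set Implicit Arguments. Unset Strict Implicit. Unset Printing Implicit Defensive.

Definition perm_rel (U R : finType) (s : {perm U}) (A : {set U * R}) : {set U * R} :=
  [set (s p.1, p.2) | p in A].

Definition user_independent (U R : finType) (w : {set U * R} -> nat) : Prop :=
  forall (A : {set U * R}) (s : {perm U}), w (perm_rel s A) = w A.

Definition res_of (U R : finType) (A : {set U * R}) (u : U) : {set R} :=
  [set r | (u, r) \in A].

Definition usr (U R : finType) (A : {set U * R}) (T : {set R}) : nat :=
  #|[set u | res_of A u == T]|.

From mathcomp Require Import all_boot all_fingroup.

Set Implicit Arguments.
Unset Strict Implicit.
Unset Printing Implicit Defensive.

(* Two user profiles agree exactly when the maps u |-> A1(u) and u |-> A2(u)
   have fibres of equal size, i.e. when their value lists (codomains) are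
   permutations of each other.  A permutation realising this, transported to
   U, is a user renaming s with A2(s u) = A1(u); then sigma(A1) = A2, and
   user-independence gives w(A1) = w(A2). *)

Lemma count_mem_codom (U K : finType) (f : U -> K) (k : K) :
  count_mem k (codom f) = #|[set u | f u == k]|.
Proof.
rewrite codomE count_map enumT cardE /enum_mem size_filter.
by apply: eq_count => u; rewrite /= inE.
Qed.

Lemma perm_of_eq_card_fibers (U K : finType) (f g : U -> K) :
  (forall k, #|[set u | f u == k]| = #|[set u | g u == k]|) ->
  exists s : {perm U}, forall u, g (s u) = f u.
Proof.
move=> eq_fibers.
have /tuple_permP[p codom_f] : perm_eq (codom f) (codom_tuple g).
  by apply/allP => k _; rewrite /= !count_mem_codom eq_fibers.
have f_enum i : f (enum_val i) = g (enum_val (p i)).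
  rewrite -(nth_codom (f (enum_val i)) f) codom_f -tnth_nth tnth_mktuple.
  by rewrite (tnth_nth (g (enum_val (p i)))) nth_codom.
pose s u := enum_val (p (enum_rank u)).
have s_inj : injective s by move=> u v /enum_val_inj/perm_inj/enum_rank_inj.
by exists (perm s_inj) => u; rewrite permE -f_enum enum_rankK.
Qed.

Section UserResourceRelations.

Variables U R : finType.
Implicit Types (A B : {set U * R}) (s : {perm U}).

Lemma res_of_inj A B : res_of A =1 res_of B -> A = B.
Proof.
move=> eq_res; apply/setP => -[u r].
by have /setP/(_ r) := eq_res u; rewrite !inE.
Qed.

Lemma res_of_perm_rel s A u : res_of (perm_rel s A) (s u) = res_of A u.
Proof.
apply/setP => r; rewrite !inE; apply/imsetP/idP => [[[v r'] vr'A [/perm_inj -> ->]] //|].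
by exists (u, r).
Qed.

End UserResourceRelations.

Theorem lemma4p8 (U R : finType) (w : {set U * R} -> nat)
  (A1 A2 : {set U * R}) :
  user_independent w ->
  (forall T : {set R}, usr A1 T = usr A2 T) ->
  w A1 = w A2.
Proof.
move=> w_indep same_usr.
have [s res_A2_s] := perm_of_eq_card_fibers same_usr.
rewrite -(w_indep A1 s); congr w; apply: res_of_inj => u.
by rewrite -(permKV s u) res_of_perm_rel res_A2_s.
Qed.
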